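(* Let $\mathsf{X}$ and $\mathsf{Y}$ be intermediate temporal logics with $\mathsf{X}\subseteq\mathsf{Y}$. A temporal theory $\Gamma$ is $\mathsf{X}$-consistent if and only if it is $\mathsf{Y}$-consistent.
   Context: Fix a countable set $\mathbb{P}$ of atoms. Temporal formulas: $\varphi ::= p\mid\bot\mid\varphi\wedge\varphi\mid\varphi\vee\varphi\mid\varphi\to\varphi\mid\circ\varphi\mid\varphi\,\mathsf{U}\,\varphi\mid\varphi\,\mathsf{R}\,\varphi$; $\Box\varphi:=\bot\,\mathsf{R}\,\varphi$. An intuitionistic temporal frame is $(W,\preccurlyeq,S)$ with $W\ne\emptyset$, $\preccurlyeq$ a partial order, $S:W\to W$ forward confluent ($w\preccurlyeq v\Rightarrow S(w)\preccurlyeq S(v)$); persistent if also backward confluent (if $S(w)=v\preccurlyeq u$ then some $t\succcurlyeq w$ has $S(t)=u$). A model adds $V:W\to2^{\mathbb{P}}$ monotone along $\preccurlyeq$. Satisfaction: atoms via $V$; $\bot$ never; $\wedge,\vee$ pointwise; $M,w\models\varphi\to\psi$ iff for all $v\succcurlyeq w$, $M,v\models\varphi$ implies $M,v\models\psi$; $\circ\varphi$ at $w$ iff $\varphi$ at $S(w)$; $\varphi\,\mathsf{U}\,\psi$: some $k\ge0$ with $\psi$ at $S^k(w)$ and $\varphi$ at $S^i(w)$ for all $0\le i<k$; $\varphi\,\mathsf{R}\,\psi$: for all $k\ge0$, $\psi$ at $S^k(w)$ or $\varphi$ at some $S^i(w)$, $0\le i<k$. Depth $\le n$: no chain of $n+1$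 pairwise distinct $\preccurlyeq$-related worlds. $\mathrm{ITL}^{\mathrm{BD}_n}$: formulas true at every world of every model on a persistent frame of depth $\le n$; $\mathrm{LTL}:=\mathrm{ITL}^{\mathrm{BD}_1}$. An intermediate temporal logic is a set $\mathsf{X}$ with $\mathrm{ITL}^{\mathrm{BD}_n}\subseteq\mathsf{X}\subseteq\mathrm{LTL}$ for some $n\ge1$, closed under modus ponens, necessitation ($\psi\in\mathsf{X}\Rightarrow\circ\psi,\Box\psi\in\mathsf{X}$) and uniform substitution. $\mathsf{X}$-models are models on persistent frames of depth $\le n$ validating every formula of $\mathsf{X}$. $\Gamma$ is $\mathsf{X}$-consistent if some $\mathsf{X}$-model satisfies all of $\Gamma$ at some world. *)

From Stdlib Require Import Arith.

Set Implicit Arguments.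

(* Atoms: the countable set P is represented by nat. *)
Inductive form : Type :=
| Var : nat -> form
| Bot : form
| And : form -> form -> form
| Or : form -> form -> form
| Imp : form -> form -> form
| Next : form -> form
| Until : form -> form -> form
| Release : form -> form -> form.

Definition Box (phi : form) : form := Release Bot phi.

Record frame : Type := Frame {
  W : Type;
  inhabW : W;
  le : W -> W -> Prop;
  succ : W -> W;
  le_refl : forall w, le w w;
  le_trans : forall u v w, le u v -> le v w -> le u w;
  le_antisym : forall u v, le u v -> le v u -> u = v;
  fwd_conf : forall w v, le w v -> le (succ w) (succ v)
}.

Definition persistent (F : frame) : Prop :=
  forall w u, le F (succ F w) u -> exists t, le F w t /\ succ F t = u.

Definition depth_le (n : nat) (F : frame) : Prop :=
  ~ exists c : nat -> W F,
      forall i j, i <= j -> j <= n -> le F (c i) (c j) /\ (i <> j -> c i <> c j).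

Record model : Type := Model {
  mframe :> frame;
  val : W mframe -> nat -> Prop;
  val_mono : forall w v p, le mframe w v -> val w p -> val v p
}.

Fixpoint iter_succ (F : frame) (k : nat) (w : W F) : W F :=
  match k with
  | 0 => w
  | S k' => succ F (iter_succ F k' w)
  end.

Fixpoint sat (M : model) (w : W M) (phi : form) {struct phi} : Prop :=
  match phi with
  | Var p => val M w p
  | Bot => False
  | And a b => sat M w a /\ sat M w b
  | Or a b => sat M w a \/ sat M w b
  | Imp a b => forall v, le M w v -> sat M v a -> sat M v b
  | Next a => sat M (succ M w) a
  | Until a b => exists k, sat M (iter_succ M k w) b /\
                   forall i, i < k -> sat M (iter_succ M i w) a
  | Release a b => forall k, sat M (iter_succ M k w) b \/
                   exists i, i < k /\ sat M (iter_succ M i w) a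
  end.

Definition valid_in (M : model) (phi : form) : Prop := forall w, sat M w phi.

Definition ITL_BD (n : nat) (phi : form) : Prop :=
  forall M : model, persistent M -> depth_le n M -> valid_in M phi.

Definition LTL : form -> Prop := ITL_BD 1.

Fixpoint subst (s : nat -> form) (phi : form) : form :=
  match phi with
  | Var p => s p
  | Bot => Bot
  | And a b => And (subst s a) (subst s b)
  | Or a b => Or (subst s a) (subst s b)
  | Imp a b => Imp (subst s a) (subst s b)
  | Next a => Next (subst s a)
  | Until a b => Until (subst s a) (subst s b)
  | Release a b => Release (subst s a) (subst s b)
  end.

Definition subset (X Y : form -> Prop) : Prop := forall phi, X phi -> Y phi.

Definition intermediate_TL (X : form -> Prop) : Prop :=
  (exists n, 1 <= n /\ subset (ITL_BD n) X) /\
  subset X LTL /\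
  (forall phi psi, X phi -> X (Imp phi psi) -> X psi) /\
  (forall psi, X psi -> X (Next psi) /\ X (Box psi)) /\
  (forall s phi, X phi -> X (subst s phi)).

Definition X_model (X : form -> Prop) (M : model) : Prop :=
  (exists n, 1 <= n /\ subset (ITL_BD n) X /\ depth_le n M) /\
  persistent M /\
  (forall phi, X phi -> valid_in M phi).

Definition X_consistent (X : form -> Prop) (Gamma : form -> Prop) : Prop :=
  exists (M : model) (w : W M), X_model X M /\ forall phi, Gamma phi -> sat M w phi.

(** A model of finite depth has, above any world, a maximal world; by
    persistence its successors are maximal too.  Truth at maximal worlds does
    not change when the order is replaced by equality, and the resulting
    discrete model is an LTL model, hence a model of every intermediate logic.
    So a theory satisfiable in some intermediate logic is satisfiable in LTL,
    and therefore in every intermediate logic. *)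

From Stdlib Require Import Lia Classical ClassicalEpsilon Setoid.

Lemma iter_succ_mono (F : frame) k w v :
  le F w v -> le F (iter_succ F k w) (iter_succ F k v).
Proof. intro Hwv; induction k; simpl; auto using fwd_conf. Qed.

Lemma sat_mono (M : model) phi w v : le M w v -> sat M w phi -> sat M v phi.
Proof.
  revert w v;
    induction phi as [p| |a IHa b IHb|a IHa b IHb|a IHa b IHb|a IHa|a IHa b IHb|a IHa b IHb];
    intros w v Hwv; simpl.
  - apply val_mono; assumption.
  - tauto.
  - intros [Ha Hb]; split; eauto.
  - intros [Ha|Hb]; [left|right]; eauto.
  - intros H u Hvu; apply H; eapply le_trans; eauto.
  - apply IHa, fwd_conf, Hwv.
  - intros [k [Hb Ha]]; exists k; split.
    + eapply IHb; [apply iter_succ_mono|]; eauto.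
    + intros i Hi; eapply IHa; [apply iter_succ_mono|]; eauto.
  - intros H k; destruct (H k) as [Hb|[i [Hi Ha]]]; [left|right].
    + eapply IHb; [apply iter_succ_mono|]; eauto.
    + exists i; split; [assumption|]; eapply IHa; [apply iter_succ_mono|]; eauto.
Qed.

Definition maximal (F : frame) (u : W F) : Prop := forall v, le F u v -> v = u.

Lemma maximal_succ (F : frame) u : persistent F -> maximal F u -> maximal F (succ F u).
Proof.
  intros P Hu v Hv; destruct (P _ _ Hv) as [t [Hut <-]].
  rewrite (Hu t Hut); reflexivity.
Qed.

Lemma maximal_iter_succ (F : frame) k u :
  persistent F -> maximal F u -> maximal F (iter_succ F k u).
Proof. intros P Hu; induction k; simpl; auto using maximal_succ. Qed.

Lemma depth_le_no_strict_chain (F : frame) n (c : nat -> W F) :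
  depth_le n F -> ~ (forall i, le F (c i) (c (S i)) /\ c (S i) <> c i).
Proof.
  intros D Hc.
  assert (Hle : forall i d, le F (c i) (c (d + i))).
  { intros i d; induction d as [|d IH]; simpl.
    - apply le_refl.
    - eapply le_trans; [apply IH | apply Hc]. }
  apply D; exists c; intros i j Hij _; split.
  - replace j with ((j - i) + i) by lia; apply Hle.
  - intros Hne Heq; apply (proj2 (Hc i)), le_antisym; [|apply Hc].
    rewrite Heq; replace j with ((j - S i) + S i) by lia; apply Hle.
Qed.

Lemma exists_maximal_above (F : frame) n w :
  depth_le n F -> exists v, le F w v /\ maximal F v.
Proof.
  intro D; apply NNPP; intro Hnone.
  assert (Hup : forall v, exists v', le F w v -> le F v v' /\ v' <> v).
  { intro v; destruct (classic (le F w v)) as [Hwv|Hwv]; [|exists v; tauto].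
    apply NNPP; intro Hno; apply Hnone; exists v; split; [assumption|].
    intros v' Hvv'; apply NNPP; intro Hne; apply Hno; exists v'; auto. }
  (* Iterating a choice of strict successors from [w] climbs forever. *)
  destruct (choice _ Hup) as [next Hnext].
  set (c k := Nat.iter k next w).
  assert (Hc : forall k, le F w (c k) /\ le F (c k) (c (S k)) /\ c (S k) <> c k).
  { induction k as [|k [Hw Hstep]]; simpl.
    - pose proof (Hnext w (le_refl F w)); split; [apply le_refl | assumption].
    - assert (Hw' : le F w (c (S k))) by (eapply le_trans; [apply Hw | apply Hstep]).
      split; [assumption | apply (Hnext _ Hw')]. }
  apply (depth_le_no_strict_chain F n c D); intro i; apply Hc.
Qed.

Lemma depth_le_mono (F : frame) n m : n <= m -> depth_le n F -> depth_le m F.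
Proof. intros Hnm D [c Hc]; apply D; exists c; intros i j Hij Hj; apply Hc; lia. Qed.

Lemma ITL_BD_antitone n m : n <= m -> subset (ITL_BD m) (ITL_BD n).
Proof. intros Hnm phi H M P D; apply H; [assumption | eapply depth_le_mono; eauto]. Qed.

Definition discrete_frame (F : frame) : frame :=
  {| W := W F;
     inhabW := inhabW F;
     le := @eq (W F);
     succ := succ F;
     le_refl := @eq_refl (W F);
     le_trans := fun u v w (Huv : u = v) Hvw => eq_trans Huv Hvw;
     le_antisym := fun u v (Huv : u = v) _ => Huv;
     fwd_conf := fun w v (Hwv : w = v) => f_equal (succ F) Hwv |}.

Definition discrete_model (M : model) : model :=
  {| mframe := discrete_frame M;
     val := val M;
     val_mono := fun w v p (Hwv : w = v) Hw => eq_ind w (fun x => val M x p) Hw v Hwv |}.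

Lemma iter_succ_discrete (F : frame) k u :
  iter_succ (discrete_frame F) k u = iter_succ F k u.
Proof. induction k as [|k IH]; simpl; [reflexivity | rewrite IH; reflexivity]. Qed.

Lemma discrete_persistent (F : frame) : persistent (discrete_frame F).
Proof. intros w u Hu; exists w; split; [reflexivity | exact Hu]. Qed.

Lemma discrete_depth_le (F : frame) n : 1 <= n -> depth_le n (discrete_frame F).
Proof.
  intros Hn [c Hc]; destruct (Hc 0 1) as [H01 Hne]; [lia | lia |].
  exact (Hne ltac:(lia) H01).
Qed.

Lemma sat_discrete_maximal (M : model) phi u :
  persistent M -> maximal M u -> (sat (discrete_model M) u phi <-> sat M u phi).
Proof.
  intro P; revert u;
    induction phi as [p| |a IHa b IHb|a IHa b IHb|a IHa b IHb|a IHa|a IHa b IHb|a IHa b IHb];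
    intros u Hu; simpl.
  7-8: setoid_rewrite iter_succ_discrete;
       setoid_rewrite (fun k => IHa _ (maximal_iter_succ M k u P Hu));
       setoid_rewrite (fun k => IHb _ (maximal_iter_succ M k u P Hu));
       reflexivity.
  - reflexivity.
  - reflexivity.
  - rewrite IHa, IHb by assumption; reflexivity.
  - rewrite IHa, IHb by assumption; reflexivity.
  - split.
    + intros H v Huv Hva; rewrite (Hu v Huv) in *.
      apply IHb, H, IHa; auto.
    + intros H v <- Hva; apply IHb, H, IHa; auto using le_refl.
  - apply IHa, maximal_succ; assumption.
Qed.

Lemma LTL_valid_discrete (M : model) phi : LTL phi -> valid_in (discrete_model M) phi.
Proof. intro H; apply H; [apply discrete_persistent | apply discrete_depth_le; lia]. Qed.

Lemma X_model_discrete X (M : model) : intermediate_TL X -> X_model X (discrete_model M).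
Proof.
  intros [[n [Hn HnX]] [HXLTL _]]; split; [|split].
  - exists n; split; [|split]; [assumption | assumption | apply discrete_depth_le, Hn].
  - apply discrete_persistent.
  - intros phi Hphi; apply LTL_valid_discrete, HXLTL, Hphi.
Qed.

Lemma X_model_subset X Y (M : model) :
  intermediate_TL X -> subset X Y -> X_model Y M -> X_model X M.
Proof.
  intros [[m [Hm HmX]] _] HXY [[n [Hn [_ D]]] [P HY]]; split; [|split].
  - exists (Nat.max n m); split; [|split].
    + lia.
    + intros phi Hphi; apply HmX; revert Hphi; apply ITL_BD_antitone; lia.
    + revert D; apply depth_le_mono; lia.
  - exact P.
  - intros phi Hphi; apply HY, HXY, Hphi.
Qed.

Theorem proposition4p9 (X Y : form -> Prop) :
  intermediate_TL X -> intermediate_TL Y -> subset X Y ->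
  forall Gamma : form -> Prop, X_consistent X Gamma <-> X_consistent Y Gamma.
Proof.
  intros HX HY HXY Gamma; split.
  - intros [M [w [[[n [_ [_ D]]] [P _]] HGamma]]].
    destruct (exists_maximal_above M n w D) as [v [Hwv Hv]].
    exists (discrete_model M), v; split.
    + apply X_model_discrete, HY.
    + intros phi Hphi; apply sat_discrete_maximal; [assumption | assumption |].
      eapply sat_mono; [exact Hwv | apply HGamma, Hphi].
  - intros [M [w [HM HGamma]]].
    exists M, w; split; [eapply X_model_subset; eassumption | exact HGamma].
Qed.
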